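(* Let $b,\beta_1,\beta_2,\gamma,\alpha,\lambda,\varepsilon_1,\varepsilon_2$ be positive real numbers, $\beta=\beta_1+\beta_2$, and consider the system $$s'=b-(b+\beta)s+\gamma r+(\varepsilon_1-\lambda)is+\varepsilon_2 rs,$$ $$i'=\beta_1 s-(b+\varepsilon_1+\alpha)i+\lambda is+\varepsilon_1 i^2+\varepsilon_2 ir,$$ $$r'=\beta_2 s-(b+\varepsilon_2+\gamma)r+\alpha i+\varepsilon_1 ir+\varepsilon_2 r^2.$$ Let $D=\{(s,i,r): s+i+r=1,\ s\ge0,\ i\ge0,\ r\ge0\}$ with relative interior $\overset{o}{D}$. Then this system has no source in $\overset{o}{D}$.
   Context: The plane $s+i+r=1$ is invariant for this system, so on it the dynamics is two-dimensional (equivalently given by substituting $r=1-s-i$). A source is a rest point at which all eigenvalues of the linearization of this (restricted, two-dimensional) system have positive real parts. *)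

From Stdlib Require Import Reals.
From Coquelicot Require Import Coquelicot.
Open Scope R_scope.

Definition ds (b beta1 beta2 gamma alpha lambda eps1 eps2 : R) (s i r : R) : R :=
  b - (b + (beta1 + beta2)) * s + gamma * r + (eps1 - lambda) * i * s + eps2 * r * s.
Definition di (b beta1 beta2 gamma alpha lambda eps1 eps2 : R) (s i r : R) : R :=
  beta1 * s - (b + eps1 + alpha) * i + lambda * i * s + eps1 * i ^ 2 + eps2 * i * r.
Definition dr (b beta1 beta2 gamma alpha lambda eps1 eps2 : R) (s i r : R) : R :=
  beta2 * s - (b + eps2 + gamma) * r + alpha * i + eps1 * i * r + eps2 * r ^ 2.

Definition F1 b beta1 beta2 gamma alpha lambda eps1 eps2 (s i : R) : R :=
  ds b beta1 beta2 gamma alpha lambda eps1 eps2 s i (1 - s - i).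
Definition F2 b beta1 beta2 gamma alpha lambda eps1 eps2 (s i : R) : R :=
  di b beta1 beta2 gamma alpha lambda eps1 eps2 s i (1 - s - i).

Definition is_eigenvalue2 (a b' c d : R) (z : C) : Prop :=
  ((RtoC a - z) * (RtoC d - z) - RtoC b' * RtoC c)%C = RtoC 0.

Definition is_source2 (f g : R -> R -> R) (x y : R) : Prop :=
  f x y = 0 /\ g x y = 0 /\
  forall z : C,
    is_eigenvalue2 (Derive (fun t => f t y) x) (Derive (fun t => f x t) y)
                   (Derive (fun t => g t y) x) (Derive (fun t => g x t) y) z ->
    0 < Re z.

(* At an interior rest point, weighting the diagonal entries of the Jacobian by the
   coordinates turns s i r (dF1/ds + dF2/di) into a sum of negative monomials, so the
   Jacobian has negative trace.  A real 2x2 matrix always has an eigenvalue whose real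
   part is at most half its trace, so such a rest point cannot be a source. *)
From Stdlib Require Import Reals Lra Psatz.
From Coquelicot Require Import Coquelicot.
Open Scope R_scope.

Lemma eigenvalue2_Re_le_half_trace (a b' c d : R) :
  exists z, is_eigenvalue2 a b' c d z /\ Re z <= (a + d) / 2.
Proof.
  set (disc := (a + d) * (a + d) - 4 * (a * d - b' * c)).
  destruct (Rle_or_lt 0 disc) as [Hdisc | Hdisc].
  - assert (Hsq := sqrt_sqrt _ Hdisc).
    assert (Hq := sqrt_pos disc).
    exists (RtoC ((a + d - sqrt disc) / 2)); split.
    + unfold is_eigenvalue2, RtoC, Cminus, Cmult, Cplus, Copp; simpl.
      f_equal; unfold disc in *; nra.
    + simpl; lra.
  - assert (Hsq := sqrt_sqrt (- disc) ltac:(lra)).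
    exists (((a + d) / 2, sqrt (- disc) / 2) : C); split.
    + unfold is_eigenvalue2, RtoC, Cminus, Cmult, Cplus, Copp; simpl.
      f_equal; unfold disc in *; nra.
    + simpl; lra.
Qed.

Lemma not_source2_of_trace_neg (f g : R -> R -> R) (x y : R) :
  Derive (fun t => f t y) x + Derive (fun t => g x t) y < 0 ->
  ~ is_source2 f g x y.
Proof.
  intros Htr [_ [_ Hsrc]].
  destruct (eigenvalue2_Re_le_half_trace (Derive (fun t => f t y) x)
              (Derive (fun t => f x t) y) (Derive (fun t => g t y) x)
              (Derive (fun t => g x t) y)) as [z [Hz HRe]].
  specialize (Hsrc z Hz); lra.
Qed.

Section RestrictedSystem.

Variables b beta1 beta2 gamma alpha lambda eps1 eps2 : R.

Local Notation f1 := (F1 b beta1 beta2 gamma alpha lambda eps1 eps2).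
Local Notation f2 := (F2 b beta1 beta2 gamma alpha lambda eps1 eps2).

Definition dF1_ds (s i : R) : R :=
  - (b + (beta1 + beta2)) - gamma + (eps1 - lambda) * i + eps2 * ((1 - s - i) - s).

Definition dF2_di (s i : R) : R :=
  - (b + eps1 + alpha) + lambda * s + 2 * eps1 * i + eps2 * ((1 - s - i) - i).

Lemma Derive_F1_s (s i : R) : Derive (fun t => f1 t i) s = dF1_ds s i.
Proof.
  apply is_derive_unique; unfold F1, ds, dF1_ds.
  auto_derive; [easy | ring].
Qed.

Lemma Derive_F2_i (s i : R) : Derive (fun t => f2 s t) i = dF2_di s i.
Proof.
  apply is_derive_unique; unfold F2, di, dF2_di.
  auto_derive; [easy | ring].
Qed.

(* [s dF1_ds - F1] and [i dF2_di - F2] are simple, and the leftover is [s i dr], which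
   equals [- s i (F1 + F2)] because [ds + di + dr] vanishes on the plane. *)
Lemma trace_weighted_identity (s i : R) :
  let r := 1 - s - i in
  s * i * r * (dF1_ds s i + dF2_di s i) =
    - (b * i * r * (i + r) + gamma * i * r ^ 2 + beta1 * s ^ 2 * r
       + beta2 * s ^ 2 * i + alpha * s * i ^ 2)
    + i * (r - s) * f1 s i + s * (r - i) * f2 s i.
Proof. unfold F1, F2, ds, di, dF1_ds, dF2_di; simpl; ring. Qed.

Lemma trace_neg_at_interior_rest_point (s i : R) :
  0 < b -> 0 <= beta1 -> 0 <= beta2 -> 0 <= gamma -> 0 <= alpha ->
  0 < s -> 0 < i -> 0 < 1 - s - i -> f1 s i = 0 -> f2 s i = 0 ->
  dF1_ds s i + dF2_di s i < 0.
Proof.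
  intros Hb Hb1 Hb2 Hg Ha Hs Hi Hr E1 E2.
  pose proof (trace_weighted_identity s i) as Hid; simpl in Hid.
  rewrite E1, E2 in Hid.
  set (r := 1 - s - i) in *.
  assert (Hsir : 0 < s * i * r) by (apply Rmult_lt_0_compat; [nra | lra]).
  assert (Hneg : s * i * r * (dF1_ds s i + dF2_di s i) < 0).
  { rewrite Hid.
    assert (0 < b * i * r * (i + r)) by
      (repeat apply Rmult_lt_0_compat; lra).
    assert (0 <= gamma * i * r ^ 2 + beta1 * s ^ 2 * r + beta2 * s ^ 2 * i
                 + alpha * s * i ^ 2) by
      (repeat apply Rplus_le_le_0_compat; repeat apply Rmult_le_pos;
       try apply pow2_ge_0; lra).
    lra. }
  nra.
Qed.

End RestrictedSystem.

Theorem corollary2p4 (b beta1 beta2 gamma alpha lambda eps1 eps2 : R) :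
  0 < b -> 0 < beta1 -> 0 < beta2 -> 0 < gamma -> 0 < alpha -> 0 < lambda ->
  0 < eps1 -> 0 < eps2 ->
  ~ (exists s i : R,
       0 < s /\ 0 < i /\ 0 < 1 - s - i /\
       is_source2 (F1 b beta1 beta2 gamma alpha lambda eps1 eps2)
                  (F2 b beta1 beta2 gamma alpha lambda eps1 eps2) s i).
Proof.
  intros Hb Hb1 Hb2 Hg Ha _ _ _ [s [i [Hs [Hi [Hr Hsrc]]]]].
  pose proof Hsrc as [E1 [E2 _]].
  revert Hsrc; apply not_source2_of_trace_neg.
  rewrite Derive_F1_s, Derive_F2_i.
  apply trace_neg_at_interior_rest_point; lra || assumption.
Qed.
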